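(* Let $p\in[1,\infty)$, let $0 < \mathsf{D}_1 \le \mathsf{D}_2$ and $\mathsf{K}>0$ be reals, and let $x\in\{-\Delta,\dots,\Delta\}^d$ with $x\ne 0$. Let $u_1,\dots,u_d$ be independent $\mathrm{Exp}(1)$ random variables and, for $t\in\mathbb{R}$ and $\sigma\in\{-1,1\}$, let $G_{x,u}(t,\sigma)=\{i\in[d] : x_i\sigma/u_i^{1/p}\ge t\}$. Then $$\Pr_{u}\left[1 \le \Big|\bigcup_{\sigma\in\{-1,1\}} G_{x,u}\big(\|x\|_p/\mathsf{D}_1,\sigma\big)\Big| \le \Big|\bigcup_{\sigma\in\{-1,1\}} G_{x,u}\big(\|x\|_p/\mathsf{D}_2,\sigma\big)\Big| \le \mathsf{K}\right] \ge 1-\exp(-\mathsf{D}_1^p)-\frac{\mathsf{D}_2^p}{\mathsf{K}}.$$ In particular, for $\delta_2\in(0,1)$, $\mathsf{D}_1=\ln(2/\delta_2)^{1/p}$, $\mathsf{D}_2=2\mathsf{D}_1$ and $\mathsf{K}=2\mathsf{D}_2^p/\delta_2$, the probability is at least $1-\delta_2$.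
   Context: $\mathrm{Exp}(1)$ denotes the exponential distribution with rate $1$, i.e. $\Pr[u > a] = e^{-a}$ for $a\ge 0$. *)

From HB Require Import structures.
From mathcomp Require Import all_boot all_order all_algebra.
From mathcomp Require Import all_classical all_reals all_analysis.
Set Implicit Arguments. Unset Strict Implicit. Unset Printing Implicit Defensive.
Import Order.TTheory GRing.Theory Num.Theory.
Local Open Scope classical_set_scope.
Local Open Scope ring_scope.

Definition lpnorm {R : realType} (d : nat) (p : R) (x : 'I_d -> int) : R :=
  (\sum_(i < d) `|(x i)%:~R : R| `^ p) `^ p^-1.

Definition Gset {R : realType} (d : nat) (p : R) (x : 'I_d -> int)
  (u : 'I_d -> R) (t sigma : R) : {set 'I_d} :=
  [set i : 'I_d | t <= (x i)%:~R * sigma / (u i `^ p^-1)].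

Definition Gcard {R : realType} (d : nat) (p : R) (x : 'I_d -> int)
  (u : 'I_d -> R) (t : R) : nat :=
  #|Gset p x u t 1 :|: Gset p x u t (-1)|.

Definition good_event {R : realType} {T : Type} (d : nat) (p : R)
  (x : 'I_d -> int) (u : 'I_d -> T -> R) (D1 D2 K : R) : set T :=
  [set w | let uw := fun i => u i w in
     [/\ (1 <= Gcard p x uw (lpnorm p x / D1))%N,
         (Gcard p x uw (lpnorm p x / D1) <= Gcard p x uw (lpnorm p x / D2))%N
       & (Gcard p x uw (lpnorm p x / D2))%:R <= K]].

Definition is_exp1 {R : realType} {d0 : measure_display} {T : measurableType d0}
  (P : probability T R) (v : T -> R) : Prop :=
  measurable_fun [set: T] v /\
  forall a : R, 0 <= a -> P [set w | a < v w] = (expR (- a))%:E.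

Definition mutually_independent {R : realType} {d0 : measure_display}
  {T : measurableType d0} (P : probability T R) (d : nat) (u : 'I_d -> T -> R) : Prop :=
  forall (J : {set 'I_d}) (B : 'I_d -> set R),
    (forall i, measurable (B i)) ->
    P (\bigcap_(i in [set j | j \in J]) (u i @^-1` B i)) =
    (\prod_(i in J) P (u i @^-1` B i))%E.

From HB Require Import structures.
From mathcomp Require Import all_boot all_order all_algebra.
From mathcomp Require Import all_classical all_reals all_analysis measurable_realfun.
From mathcomp Require Import ring lra.
Import Order.TTheory GRing.Theory Num.Theory.
Local Open Scope classical_set_scope.
Local Open Scope ring_scope.

(* Coordinate i lies in G(t,1) \/ G(t,-1) exactly when u_i <= |x_i|^p / t^p, and for
   t = ||x||_p / D these thresholds sum to D^p.  The unions grow as t decreases, which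
   gives the middle inequality for free.  The union at level ||x||_p / D1 is empty only
   if every u_i exceeds its threshold, an event of probability exp(-D1^p) by
   independence.  The size of the union at level ||x||_p / D2 has expectation
   sum_i (1 - exp(-a_i)) <= sum_i a_i = D2^p, so by Markov's inequality it exceeds K
   with probability at most D2^p / K. *)

Section PowR.
Context {R : realType} {p : R}.
Hypothesis p_gt0 : 0 < p.

Lemma ler_powR2r {a b : R} : 0 <= a -> 0 <= b -> (a `^ p <= b `^ p) = (a <= b).
Proof.
move=> a0 b0; apply/idP/idP => [|]; last by apply: ge0_ler_powR; rewrite ?nnegrE // ltW.
apply: contraLR; rewrite -!ltNge.
exact: gt0_ltr_powR.
Qed.

Lemma ler_div_powRV (t c v : R) : 0 < t -> 0 <= c -> 0 < v ->
  (t <= c / v `^ p^-1) = (v <= c `^ p / t `^ p).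
Proof.
move=> t0 c0 v0; have v1 : 0 < v `^ p^-1 by apply: powR_gt0.
have vK : (v `^ p^-1) `^ p = v.
  by rewrite -powRrM mulVf ?gt_eqF // powRr1 // ltW.
have tv0 : 0 <= t * v `^ p^-1 by rewrite mulr_ge0 // ltW.
rewrite ler_pdivlMr // -(ler_powR2r tv0 c0) powRM ?(ltW t0) ?(ltW v1) // vK.
by rewrite [in RHS]ler_pdivlMr ?powR_gt0 // mulrC.
Qed.

End PowR.

Definition Gbound {R : realType} (p : R) {d : nat} (x : 'I_d -> int) (t : R)
  (i : 'I_d) : R := `|(x i)%:~R : R| `^ p / t `^ p.

Section Thresholds.
Context {R : realType} {p : R} {d : nat} {x : 'I_d -> int}.
Hypothesis p_gt0 : 0 < p.

Lemma mem_Gunion (u : 'I_d -> R) t i :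
  (i \in Gset p x u t 1 :|: Gset p x u t (-1)) =
  (t <= `|(x i)%:~R : R| / u i `^ p^-1).
Proof.
by rewrite !inE mulr1 mulrN1 mulNr -ler_normr normrM normfV (ger0_norm (powR_ge0 _ _)).
Qed.

Lemma mem_Gunion_bound (u : 'I_d -> R) t i : 0 < t -> 0 < u i ->
  (i \in Gset p x u t 1 :|: Gset p x u t (-1)) = (u i <= Gbound p x t i).
Proof. by move=> t0 ui0; rewrite mem_Gunion ler_div_powRV. Qed.

Lemma Gcard_bound (u : 'I_d -> R) t : 0 < t -> (forall i, 0 < u i) ->
  Gcard p x u t = #|[set i | u i <= Gbound p x t i]%SET|.
Proof. by move=> t0 u0; apply: eq_card => i; rewrite mem_Gunion_bound // inE. Qed.

Lemma Gcard_homo (u : 'I_d -> R) t1 t2 : t2 <= t1 ->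
  (Gcard p x u t1 <= Gcard p x u t2)%N.
Proof.
move=> t21; apply/subset_leq_card/fintype.subsetP => i.
by rewrite !mem_Gunion; apply: le_trans.
Qed.

Hypothesis x_neq0 : exists i, x i != 0.

Lemma lpnorm_powR : lpnorm p x `^ p = \sum_(i < d) `|(x i)%:~R : R| `^ p.
Proof.
by rewrite -powRrM mulVf ?gt_eqF // powRr1 // sumr_ge0 // => i _; apply: powR_ge0.
Qed.

Lemma lpnorm_gt0 : 0 < lpnorm p x.
Proof.
have [i0 xi0] := x_neq0; apply: (gt0_powR p_gt0 (powR_ge0 _ _)).
by rewrite lpnorm_powR (bigD1 i0) //= ltr_wpDr ?sumr_ge0 ?powR_gt0 // ?normr_gt0 ?intr_eq0.
Qed.

Lemma sum_Gbound {D : R} : 0 < D -> \sum_(i < d) Gbound p x (lpnorm p x / D) i = D `^ p.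
Proof.
move=> D0; have Np0 : 0 < lpnorm p x `^ p by rewrite powR_gt0 // lpnorm_gt0.
rewrite /Gbound -mulr_suml -lpnorm_powR powRM ?invr_ge0 ?(ltW lpnorm_gt0) ?(ltW D0) //.
rewrite invfM mulrA divff ?mul1r ?gt_eqF //.
by rewrite -[D^-1]powR_inv1 ?(ltW D0) // -powRrM mulN1r powRN invrK.
Qed.

Lemma not_good_event {T : Type} {u : 'I_d -> T -> R} {D1 D2 K : R} {w : T} :
  0 < D1 -> D1 <= D2 -> (forall i, 0 < u i w) -> ~ good_event p x u D1 D2 K w ->
  (forall i, Gbound p x (lpnorm p x / D1) i < u i w) \/
  K < \sum_(i < d) \1_([set v | u i v <= Gbound p x (lpnorm p x / D2) i]) w.
Proof.
move=> D10 D12 u0 not_good; set t1 := lpnorm p x / D1; set t2 := lpnorm p x / D2.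
have t10 : 0 < t1 by rewrite divr_gt0 // lpnorm_gt0.
have t20 : 0 < t2 by rewrite divr_gt0 ?lpnorm_gt0 // (lt_le_trans D10).
have t21 : t2 <= t1 by rewrite ler_pM2l ?lpnorm_gt0 // lef_pV2 // posrE (lt_le_trans D10).
have [G1_gt0|] := boolP (0 < Gcard p x (u^~ w) t1)%N.
  right; rewrite ltNge; apply/negP => G2_le; apply: not_good; split => //.
    exact: Gcard_homo.
  apply: le_trans G2_le; rewrite Gcard_bound // -sum1_card natr_sum big_mkcond /=.
  rewrite le_eqVlt; apply/orP; left; apply/eqP/eq_bigr => i _.
  by rewrite indicE inE; case: ifPn => [ui_le|/negP ui_gt];
    [rewrite mem_set | rewrite memNset].
rewrite lt0n negbK Gcard_bound // cards_eq0 => /eqP G1_0; left => i.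
rewrite ltNge; apply/negP => ui_le.
have : i \in [set j | u j w <= Gbound p x t1 j]%SET by rewrite inE.
by rewrite G1_0 inE.
Qed.

End Thresholds.

Lemma measurable_preimageT (d1 d2 : measure_display) (T1 : measurableType d1)
    (T2 : measurableType d2) (v : T1 -> T2) (B : set T2) :
  measurable_fun setT v -> measurable B -> measurable (v @^-1` B).
Proof. by move=> mv mB; rewrite -[_ @^-1` _]setTI; apply: mv. Qed.

Section Measurability.
Context {R : realType} {d0 : measure_display} {T : measurableType d0}.

Lemma measurable_determined (I : finType) (f : T -> I -> bool) (F : set T) :
  (forall i, measurable [set w | f w i]) ->
  (forall w w', (forall i, f w i = f w' i) -> F w -> F w') -> measurable F.
Proof.
move=> mf hF.
have -> : F = \bigcup_(g in [set g : {ffun I -> bool} |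
    exists2 w, F w & forall i, f w i = g i])
    \bigcap_(i in [set: I]) [set w | f w i = g i].
  apply/seteqP; split => [w Fw|w [g [w' Fw' hw'] hg]].
  - exists [ffun i => f w i]; first by exists w => // i; rewrite ffunE.
    by move=> i _ /=; rewrite ffunE.
  - by apply: (hF w') => // i; rewrite hw'; apply/esym; exact: hg.
apply: fin_bigcup_measurable; first exact: finite_finset.
move=> g _; apply: fin_bigcap_measurable; first exact: finite_finset.
move=> i _; case: (g i); first exact: mf.
have -> : [set w | f w i = false] = ~` [set w | f w i].
  by apply/seteqP; split => w /=; case: (f w i).
exact/measurableC/mf.
Qed.

Lemma measurable_le_div_powR (t c q : R) : measurable [set r : R | t <= c / r `^ q].
Proof.
under eq_set do rewrite -powRN.
rewrite -[X in measurable X]preimage_itvcy.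
apply: measurable_preimageT; last exact: measurable_itv.
exact: measurable_funM (measurable_cst _) (measurable_powR _).
Qed.

Lemma measurable_good_event (p : R) (d : nat) (x : 'I_d -> int)
    (u : 'I_d -> T -> R) D1 D2 K :
  (forall i, measurable_fun setT (u i)) -> measurable (good_event p x u D1 D2 K).
Proof.
move=> mu; pose G t w := Gset p x (u^~ w) t 1 :|: Gset p x (u^~ w) t (-1).
apply: (@measurable_determined ('I_d + 'I_d)%type (fun w j =>
  match j with
  | inl i => i \in G (lpnorm p x / D1) w
  | inr i => i \in G (lpnorm p x / D2) w
  end)).
  by case=> i /=; under eq_set do rewrite mem_Gunion;
    exact: measurable_preimageT (mu i) (measurable_le_div_powR _ _ _).
move=> w w' same; rewrite /good_event /Gcard /= -!/(G _ w) -!/(G _ w').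
have -> : G (lpnorm p x / D1) w' = G (lpnorm p x / D1) w.
  by apply/setP => i; have := same (inl i).
have -> : G (lpnorm p x / D2) w' = G (lpnorm p x / D2) w.
  by apply/setP => i; have := same (inr i).
by [].
Qed.

Lemma measurable_indic_sum_gt (n : nat) (A : 'I_n -> set T) (K : R) :
  (forall i, measurable (A i)) -> measurable [set w | K < \sum_(i < n) \1_(A i) w].
Proof.
move=> mA; apply: (@measurable_determined _ (fun w i => w \in A i)).
  by move=> i; under eq_set do rewrite in_setE; exact: mA.
move=> w w' same; rewrite /=.
suff -> : \sum_(i < n) \1_(A i) w' = \sum_(i < n) \1_(A i) w :> R by [].
by apply: eq_bigr => i _; rewrite !indicE same.
Qed.

End Measurability.

Lemma indic_sum_markov {R : realType} {d0 : measure_display} {T : measurableType d0}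
    (mu : {measure set T -> \bar R}) {n : nat} {A : 'I_n -> set T} {K : R} :
  (forall i, measurable (A i)) -> 0 < K ->
  (K%:E * mu [set w | (K < \sum_(i < n) \1_(A i) w)%R] <= \sum_(i < n) mu (A i))%E.
Proof.
move=> mA K0; set W := [set w | _ < _].
have mW : measurable W by exact: measurable_indic_sum_gt.
have -> : (K%:E * mu W = \int[mu]_(w in setT) (K * \1_W w)%:E)%E.
  rewrite (integralZl_indic _ (fun=> W)) // ?integral_indic ?setIT //.
  by move=> /(lt_trans K0); rewrite ltxx.
have -> : (\sum_(i < n) mu (A i) = \int[mu]_(w in setT) (\sum_(i < n) (\1_(A i) w)%:E))%E.
  rewrite ge0_integral_sum //.
  - by apply: eq_bigr => i _; rewrite integral_indic // setIT.
  - by move=> i; apply/measurable_EFinP; exact: measurable_indic.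
apply: ge0_le_integral => //.
- by move=> w _; rewrite lee_fin mulr_ge0 // ?indicE ?ler0n // ltW.
- apply/measurable_EFinP/measurable_funM; first exact: measurable_cst.
  exact: measurable_indic.
- by apply: emeasurable_sum => i; apply/measurable_EFinP; exact: measurable_indic.
move=> w _; rewrite sumEFin lee_fin indicE.
have [Ww|Ww] := pselect (W w); first by rewrite mem_set // mulr1 ltW.
by rewrite memNset // mulr0 sumr_ge0 // => i _; rewrite indicE ler0n.
Qed.

Section Exponential.
Context {R : realType} {d0 : measure_display} {T : measurableType d0}.
Context {P : probability T R} {d : nat} {u : 'I_d -> T -> R}.
Hypothesis u_exp1 : forall i, is_exp1 P (u i).
Hypothesis u_indep : mutually_independent P u.

Lemma measurable_exp1 i : measurable_fun setT (u i).
Proof. by case: (u_exp1 i). Qed.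

Lemma exp1_le i a : 0 <= a -> P [set w | u i w <= a] = (1 - expR (- a))%:E.
Proof.
move=> a0; have -> : [set w | u i w <= a] = ~` [set w | a < u i w].
  by apply/seteqP; split => w /=; rewrite leNgt => /negP.
rewrite probability_setC ?((u_exp1 i).2 a a0) //.
rewrite -preimage_itvoy.
exact: measurable_preimageT (measurable_exp1 i) (measurable_itv _).
Qed.

Lemma exp1_le_bound i a : 0 <= a -> (P [set w | (u i w <= a)%R] <= a%:E)%E.
Proof. by move=> a0; rewrite exp1_le // lee_fin; have := expR_ge1Dx (- a); lra. Qed.

Lemma exp1_all_gt {c : 'I_d -> R} : (forall i, 0 <= c i) ->
  P (\bigcap_i [set w | c i < u i w]) = (expR (- \sum_(i < d) c i))%:E.
Proof.
move=> c0; have := u_indep [set: 'I_d]%SET (fun i => `]c i, +oo[%classic).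
have -> : [set j | j \in [set: 'I_d]%SET] = [set: 'I_d].
  by apply/seteqP; split => j; rewrite /= inE.
under eq_bigcapr do rewrite preimage_itvoy.
move=> ->; last by move=> i; exact: measurable_itv.
under eq_bigr => i _ do rewrite preimage_itvoy ((u_exp1 i).2 _ (c0 i)).
rewrite prodEFin -expR_sum sumrN.
by rewrite (eq_bigl (fun _ => true)) // => i; rewrite inE.
Qed.

End Exponential.

Section GoodEvent.
Context {R : realType} {p : R} {d : nat} {x : 'I_d -> int}.
Context {d0 : measure_display} {T : measurableType d0} {P : probability T R}.
Context {u : 'I_d -> T -> R}.
Hypotheses (p_gt0 : 0 < p) (x_neq0 : exists i, x i != 0).
Hypotheses (u_exp1 : forall i, is_exp1 P (u i)) (u_indep : mutually_independent P u).
Variables (D1 D2 K : R).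
Hypotheses (D1_gt0 : 0 < D1) (D12 : D1 <= D2) (K_gt0 : 0 < K).

Let D2_gt0 : 0 < D2. Proof. exact: lt_le_trans D1_gt0 D12. Qed.

Let Gbound_ge0 t i : 0 <= Gbound p x t i.
Proof. by rewrite divr_ge0 ?powR_ge0. Qed.

Let below i := [set w | u i w <= Gbound p x (lpnorm p x / D2) i].
(* Exponential variables are positive only almost surely. *)
Let all_pos := \bigcap_i [set w | 0 < u i w].
Let all_above := \bigcap_i [set w | Gbound p x (lpnorm p x / D1) i < u i w].
Let many_below := [set w | K < \sum_(i < d) \1_(below i) w].

Let measurable_gt i c : measurable [set w | c < u i w].
Proof.
by rewrite -preimage_itvoy;
  exact: measurable_preimageT (measurable_exp1 u_exp1 i) (measurable_itv _).
Qed.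

Let measurable_below i : measurable (below i).
Proof.
by rewrite /below -preimage_itvNyc;
  exact: measurable_preimageT (measurable_exp1 u_exp1 i) (measurable_itv _).
Qed.

Let measurable_all_pos : measurable all_pos.
Proof.
by apply: fin_bigcap_measurable; [exact: finite_finset | move=> i _; exact: measurable_gt].
Qed.

Let measurable_all_above : measurable all_above.
Proof.
by apply: fin_bigcap_measurable; [exact: finite_finset | move=> i _; exact: measurable_gt].
Qed.

Let measurable_many_below : measurable many_below.
Proof. exact: measurable_indic_sum_gt. Qed.

Lemma not_good_event_subset :
  ~` good_event p x u D1 D2 K `<=` (~` all_pos `|` all_above) `|` many_below.
Proof.
move=> w not_good; have [pos_w|] := pselect (all_pos w); last by left; left.
have := not_good_event p_gt0 x_neq0 D1_gt0 D12 (fun i => pos_w i I) not_good.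
case=> [above_w|many_w]; last by right.
by left; right => i _; exact: above_w.
Qed.

Lemma prob_not_all_pos : P (~` all_pos) = 0%E.
Proof.
rewrite probability_setC // (exp1_all_gt u_exp1 u_indep (fun=> lexx 0)).
by rewrite big1 // oppr0 expR0 subee.
Qed.

Lemma prob_all_above : P all_above = (expR (- D1 `^ p))%:E.
Proof. by rewrite (exp1_all_gt u_exp1 u_indep (Gbound_ge0 _)) sum_Gbound. Qed.

Lemma prob_many_below_le : (P many_below <= (D2 `^ p / K)%:E)%E.
Proof.
rewrite mulrC EFinM lee_pdivlMl // -(sum_Gbound p_gt0 x_neq0 D2_gt0) -sumEFin.
apply: le_trans (indic_sum_markov P measurable_below K_gt0) _.
by apply: lee_sum => i _; exact: exp1_le_bound u_exp1 i _ (Gbound_ge0 _ i).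
Qed.

Lemma prob_not_good_event_le :
  (P (~` good_event p x u D1 D2 K) <= (expR (- D1 `^ p) + D2 `^ p / K)%:E)%E.
Proof.
have mF : measurable (good_event p x u D1 D2 K).
  by apply: measurable_good_event; exact: measurable_exp1.
have mPA : measurable (~` all_pos `|` all_above).
  exact/measurableU/measurable_all_above/measurableC.
have mU : measurable ((~` all_pos `|` all_above) `|` many_below) by exact: measurableU.
apply: le_trans (le_measure _ (mem_set (measurableC mF)) (mem_set mU)
  not_good_event_subset) _.
apply: le_trans (measureU2 _ mPA measurable_many_below) _.
rewrite EFinD leeD ?prob_many_below_le //.
apply: le_trans (measureU2 _ (measurableC measurable_all_pos) measurable_all_above) _.
rewrite -[X in (_ <= X)%E]add0e.
by apply: leeD; [rewrite -prob_not_all_pos | rewrite -prob_all_above].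
Qed.

Lemma good_event_prob_ge :
  ((1 - expR (- (D1 `^ p)) - D2 `^ p / K)%:E <= P (good_event p x u D1 D2 K))%E.
Proof.
rewrite -(setCK (good_event p x u D1 D2 K)) probability_setC; last first.
  by apply/measurableC/measurable_good_event; exact: measurable_exp1.
by apply: le_trans (leeB (lexx 1%E) prob_not_good_event_le); rewrite -EFinB opprD addrA.
Qed.

End GoodEvent.

Lemma ln_delta_parameters {R : realType} {p delta : R} : 0 < p -> 0 < delta < 1 ->
  let D1 := ln (2 / delta) `^ p^-1 in
  let D2 := 2 * D1 in
  let K := 2 * D2 `^ p / delta in
  [/\ 0 < D1, D1 <= D2, 0 < K & 1 - expR (- D1 `^ p) - D2 `^ p / K = 1 - delta].
Proof.
move=> p0 /andP[delta0 delta1] D1 D2 K.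
have ln_gt0 : 0 < ln (2 / delta) by rewrite ln_gt0 // ltr_pdivlMr // mul1r; lra.
have D10 : 0 < D1 by rewrite powR_gt0.
have D2p0 : 0 < D2 `^ p by rewrite powR_gt0 // mulr_gt0.
have D1K : D1 `^ p = ln (2 / delta).
  by rewrite -powRrM mulVf ?gt_eqF // powRr1 // ltW.
split => //; first by rewrite /D2; lra.
  by rewrite divr_gt0 // mulr_gt0.
rewrite D1K expRN lnK ?posrE ?divr_gt0 // invf_div /K.
by field; rewrite !gt_eqF.
Qed.

Theorem mainTheorem4 (R : realType) (p : R) (Delta d : nat) (x : 'I_d -> int)
  (d0 : measure_display) (T : measurableType d0) (P : probability T R)
  (u : 'I_d -> T -> R) :
  1 <= p ->
  (forall i, `|x i| <= Delta%:Z) ->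
  (exists i, x i != 0) ->
  (forall i, is_exp1 P (u i)) ->
  mutually_independent P u ->
  (forall D1 D2 K : R, 0 < D1 -> D1 <= D2 -> 0 < K ->
     ((1 - expR (- (D1 `^ p)) - D2 `^ p / K)%:E <= P (good_event p x u D1 D2 K))%E)
  /\
  (forall delta2 : R, 0 < delta2 < 1 ->
     let D1 := ln (2 / delta2) `^ p^-1 in
     let D2 := 2 * D1 in
     let K := 2 * D2 `^ p / delta2 in
     ((1 - delta2)%:E <= P (good_event p x u D1 D2 K))%E).
Proof.
(* The bound Delta on the coordinates plays no role. *)
move=> p_ge1 _ x_neq0 u_exp1 u_indep; have p0 : 0 < p := lt_le_trans ltr01 p_ge1.
split=> [D1 D2 K|delta2 delta2_01 /=]; first exact: good_event_prob_ge.
have [D10 D12 K0 <-] := ln_delta_parameters p0 delta2_01.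
exact: good_event_prob_ge.
Qed.
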